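(* TC-Approval is Pareto optimal, while CO-Approval and UC-Approval are not Pareto optimal.
   Context: A tournament $T=(V(T),\succ)$ is a finite set of candidates with an asymmetric and complete binary relation $\succ$. Tournament solutions: the top cycle $TC(T)$ is the unique minimal nonempty $X\subseteq V(T)$ with $x\succ y$ for all $x\in X$, $y\notin X$; the Copeland set $CO(T)$ is the set of candidates of maximum outdegree; the uncovered set $UC(T)$ is the set of kings, where $a$ is a king if for every $b\neq a$, either $a\succ b$ or there is $c$ with $a\succ c\succ b$. An election $\mathcal{E}=(\mathcal{C},\mathcal{T})$ has a finite candidate set and a finite list of votes, each a tournament on $\mathcal{C}$. For a tournament solution $f$, $f$-Approval gives candidate $c$ score $|\{T\in\mathcal{T}: c\in f(T)\}|$ (with multiplicity); winners are those of highest score. A voting correspondence $\varphi$ is Pareto optimal if for every election $\mathcal{E}=(\mathcal{C},\mathcal{T})$ and every two candidates $a,b$ such that $a\succ b$ in every vote of $\mathcal{T}$, $a\notin\varphi(\mathcal{E})$ implies $b\notin\varphi(\mathcal{E})$. *)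

From mathcomp Require Import all_boot.
Set Implicit Arguments. Unset Strict Implicit. Unset Printing Implicit Defensive.

Record tournament (C : finType) := Tournament {
  beats : rel C;
  beats_asym : forall x y, beats x y -> ~~ beats y x;
  beats_complete : forall x y, x != y -> beats x y || beats y x
}.

Definition tsolution := forall C : finType, tournament C -> {set C}.

Definition dominant (C : finType) (T : tournament C) (X : {set C}) : bool :=
  [forall x in X, forall y in ~: X, beats T x y].

(* Top cycle: the (unique) minimal nonempty dominant set. *)
Definition TC : tsolution := fun C T =>
  odflt set0 [pick X | minset (fun X : {set C} => (X != set0) && dominant T X) X].

Definition outdeg (C : finType) (T : tournament C) (x : C) : nat :=
  #|[set y | beats T x y]|.

Definition CO : tsolution := fun C T =>
  [set x | [forall y, outdeg T y <= outdeg T x]].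

Definition is_king (C : finType) (T : tournament C) (a : C) : bool :=
  [forall b, (b != a) ==> (beats T a b || [exists c, beats T a c && beats T c b])].

(* Uncovered set = set of kings. *)
Definition UC : tsolution := fun C T => [set a | is_king T a].

Definition approval_score (f : tsolution) (C : finType)
  (votes : seq (tournament C)) (c : C) : nat :=
  count (fun T => c \in f C T) votes.

Definition approval (f : tsolution) (C : finType)
  (votes : seq (tournament C)) : {set C} :=
  [set c | [forall d, approval_score f votes d <= approval_score f votes c]].

Definition voting_corr := forall C : finType, seq (tournament C) -> {set C}.

Definition pareto_optimal (phi : voting_corr) : Prop :=
  forall (C : finType) (votes : seq (tournament C)) (a b : C),
    all (fun T => beats T a b) votes ->
    a \notin phi C votes -> b \notin phi C votes.

From mathcomp Require Import all_boot.
Set Implicit Arguments. Unset Strict Implicit. Unset Printing Implicit Defensive.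

(* The top cycle is a dominant set, so a candidate beating a member of TC(T)
   is itself in TC(T); if a beats b in every vote, a is therefore approved in
   every vote that approves b, and b cannot outscore a.  For CO and UC this
   closure property fails on a single tournament T with a -> b, b chosen and
   a not; in the one-vote election (T) the winners are exactly the chosen
   candidates, so b wins although a, who beats b unanimously, does not. *)

Definition dominator_closed (f : tsolution) : Prop :=
  forall (C : finType) (T : tournament C) (a b : C),
    beats T a b -> b \in f C T -> a \in f C T.

Lemma dominant_beats_closed (C : finType) (T : tournament C) (X : {set C}) a b :
  dominant T X -> beats T a b -> b \in X -> a \in X.
Proof.
move=> /forall_inP domX hab bX; apply: contraT => aNX.
have hba : beats T b a by apply: (forall_inP (domX b bX)); rewrite inE.
by move: (beats_asym hab); rewrite hba.
Qed.

Lemma TC_dominant (C : finType) (T : tournament C) : dominant T (TC T).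
Proof.
rewrite /TC; case: pickP => [X /minsetP [/andP [_ domX] _] | _] //=.
by apply/forall_inP => x; rewrite inE.
Qed.

Lemma TC_dominator_closed : dominator_closed TC.
Proof. by move=> C T a b; apply: dominant_beats_closed (TC_dominant T). Qed.

Lemma approval_score_le (f : tsolution) (C : finType)
    (votes : seq (tournament C)) (a b : C) :
  dominator_closed f -> all (fun T => beats T a b) votes ->
  approval_score f votes b <= approval_score f votes a.
Proof.
move=> closed_f /all_filterP <-; rewrite /approval_score !count_filter.
by apply: sub_count => T /andP [hb hab]; rewrite /= hab (closed_f _ _ _ _ hab hb).
Qed.

Lemma approval_pareto_optimal (f : tsolution) :
  dominator_closed f -> pareto_optimal (approval f).
Proof.
move=> closed_f C votes a b ab_votes; rewrite !inE => /forallPn [d hd].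
apply/forallPn; exists d; rewrite -ltnNge in hd; rewrite -ltnNge.
exact: leq_ltn_trans (approval_score_le closed_f ab_votes) hd.
Qed.

Lemma approval_score_single (f : tsolution) (C : finType)
    (T : tournament C) (c : C) :
  approval_score f [:: T] c = (c \in f C T).
Proof. by rewrite /approval_score /= addn0. Qed.

Lemma not_pareto_optimal_approval (f : tsolution) (C : finType)
    (T : tournament C) (a b : C) :
  beats T a b -> b \in f C T -> a \notin f C T -> ~ pareto_optimal (approval f).
Proof.
move=> hab hb ha po.
have bW : b \in approval f [:: T].
  by rewrite inE; apply/forallP => d; rewrite !approval_score_single hb leq_b1.
have aNW : a \notin approval f [:: T].
  by rewrite inE negb_forall; apply/existsP; exists b;
    rewrite !approval_score_single hb (negbTE ha).
by move: (po C [:: T] a b); rewrite /= hab bW => /(_ isT aNW).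
Qed.

Lemma forall_all_enum (T : finType) (P : pred T) :
  [forall x, P x] = all P (enum T).
Proof.
by apply/forallP/allP => [H x _ | H x]; [apply: H | apply: H; rewrite mem_enum].
Qed.

Lemma exists_has_enum (T : finType) (P : pred T) :
  [exists x, P x] = has P (enum T).
Proof.
by apply/existsP/hasP => [[x Px] | [x _ Px]]; exists x; rewrite ?mem_enum.
Qed.

Lemma outdeg_count (C : finType) (T : tournament C) (x : C) :
  outdeg T x = count (beats T x) (enum C).
Proof. by rewrite enumT /outdeg cardsE cardE /enum_mem size_filter. Qed.

(* Not [inord k]: it is built with the opaque [idP] and does not reduce. *)
Definition i0 : 'I_4 := @Ordinal 4 0 isT.
Definition i1 : 'I_4 := @Ordinal 4 1 isT.
Definition i2 : 'I_4 := @Ordinal 4 2 isT.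
Definition i3 : 'I_4 := @Ordinal 4 3 isT.

Lemma enum_ord4 : enum 'I_4 = [:: i0; i1; i2; i3].
Proof. by apply: (inj_map val_inj); rewrite val_enum_ord. Qed.

Definition rel_of_edges (E : seq (nat * nat)) : rel 'I_4 :=
  fun x y => (val x, val y) \in E.

(* Outdegrees 1, 2, 2, 1: CO = {1, 2} although 0 beats 1. *)
Definition CO_edges := [:: (0, 1); (1, 2); (1, 3); (2, 0); (3, 0); (2, 3)].

Lemma CO_edges_asym x y :
  rel_of_edges CO_edges x y -> ~~ rel_of_edges CO_edges y x.
Proof. by case: x => [[|[|[|[|?]]]] ?]; case: y => [[|[|[|[|?]]]] ?]. Qed.

Lemma CO_edges_complete x y :
  x != y -> rel_of_edges CO_edges x y || rel_of_edges CO_edges y x.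
Proof. by case: x => [[|[|[|[|?]]]] ?]; case: y => [[|[|[|[|?]]]] ?]. Qed.

Definition T_CO := Tournament CO_edges_asym CO_edges_complete.

Lemma CO_approval_not_pareto_optimal : ~ pareto_optimal (approval CO).
Proof.
apply: (@not_pareto_optimal_approval _ _ T_CO i0 i1) => //;
  by rewrite inE forall_all_enum enum_ord4 /= !outdeg_count enum_ord4.
Qed.

(* 1 is a king (1 -> 2 -> {0, 3}); 0 beats only 1, which loses to 3. *)
Definition UC_edges := [:: (0, 1); (1, 2); (2, 3); (3, 0); (3, 1); (2, 0)].

Lemma UC_edges_asym x y :
  rel_of_edges UC_edges x y -> ~~ rel_of_edges UC_edges y x.
Proof. by case: x => [[|[|[|[|?]]]] ?]; case: y => [[|[|[|[|?]]]] ?]. Qed.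

Lemma UC_edges_complete x y :
  x != y -> rel_of_edges UC_edges x y || rel_of_edges UC_edges y x.
Proof. by case: x => [[|[|[|[|?]]]] ?]; case: y => [[|[|[|[|?]]]] ?]. Qed.

Definition T_UC := Tournament UC_edges_asym UC_edges_complete.

Lemma UC_approval_not_pareto_optimal : ~ pareto_optimal (approval UC).
Proof.
apply: (@not_pareto_optimal_approval _ _ T_UC i0 i1) => //;
  by rewrite inE /is_king forall_all_enum enum_ord4 /= !exists_has_enum enum_ord4.
Qed.

Theorem theorem4 :
  pareto_optimal (approval TC) /\
  ~ pareto_optimal (approval CO) /\
  ~ pareto_optimal (approval UC).
Proof.
split; first exact: approval_pareto_optimal TC_dominator_closed.
split; [exact: CO_approval_not_pareto_optimal | exact: UC_approval_not_pareto_optimal].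
Qed.
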